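(* Let $v,X,Y\in\mathbb{R}^d$ with $\|X\|<\|v\|$ and $\|Y\|<\|v\|$. Then $$\alpha(v+X,v+Y)\geq -\frac{\|X\|\|Y\|}{\|v\|^2}+\sqrt{1-\frac{\|X\|^2}{\|v\|^2}}\sqrt{1-\frac{\|Y\|^2}{\|v\|^2}}.$$
   Context: For nonzero $a,b\in\mathbb{R}^d$, the cosine similarity is $\alpha(a,b)=\frac{\langle a,b\rangle}{\|a\|\|b\|}$. *)

From mathcomp Require Import all_boot all_order all_algebra.
Set Implicit Arguments. Unset Strict Implicit. Unset Printing Implicit Defensive.
Import Order.TTheory GRing.Theory Num.Theory.
Local Open Scope ring_scope.

Definition dotp (R : rcfType) (d : nat) (a b : 'rV[R]_d) : R :=
  \sum_(i < d) a ord0 i * b ord0 i.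

Definition enorm (R : rcfType) (d : nat) (a : 'rV[R]_d) : R :=
  Num.sqrt (dotp a a).

Definition cossim (R : rcfType) (d : nat) (a b : 'rV[R]_d) : R :=
  dotp a b / (enorm a * enorm b).

(* Write N = |v|^2 and G(v, a) = N |a|^2 - <v, a>^2 for the Gram determinant,
   i.e. N |a|^2 times the squared sine of the angle between v and a.
   Cauchy-Schwarz applied to the components of a and b orthogonal to v gives
   N <a, b> >= <v, a> <v, b> - sqrt G(v, a) sqrt G(v, b).  For a = v + X the
   difference |X|^2 |a|^2 - G(v, a) is the square (<v, X> + |X|^2)^2, so
   sqrt G(v, a) <= |X| |a| and, as <v, a> >= 0, <v, a> >= sqrt (N - |X|^2) |a|.
   Inserting these bounds for a = v + X and b = v + Y and dividing by N |a| |b|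
   gives the claim, which is cos(angle(a, b)) >= cos(t_X + t_Y) with
   sin t_X = |X| / |v|. *)

From mathcomp Require Import all_boot all_order all_algebra.
From mathcomp Require Import ring lra.
Set Implicit Arguments. Unset Strict Implicit. Unset Printing Implicit Defensive.
Import Order.TTheory GRing.Theory Num.Theory.
Local Open Scope ring_scope.

Section InnerProduct.
Variables (R : rcfType) (d : nat).
Implicit Types (v a b X : 'rV[R]_d).

Lemma dotpC a b : dotp a b = dotp b a.
Proof. by apply: eq_bigr => i _; rewrite mulrC. Qed.

Lemma dotpDl a b c : dotp (a + b) c = dotp a c + dotp b c.
Proof. by rewrite /dotp -big_split; apply: eq_bigr => i _; rewrite !mxE mulrDl. Qed.

Lemma dotpDr a b c : dotp a (b + c) = dotp a b + dotp a c.
Proof. by rewrite dotpC dotpDl !(dotpC a). Qed.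

Lemma dotpZl k a b : dotp (k *: a) b = k * dotp a b.
Proof. by rewrite /dotp mulr_sumr; apply: eq_bigr => i _; rewrite !mxE mulrA. Qed.

Lemma dotpZr k a b : dotp a (k *: b) = k * dotp a b.
Proof. by rewrite dotpC dotpZl dotpC. Qed.

Lemma dotp0r a : dotp a 0 = 0.
Proof. by rewrite /dotp big1 // => i _; rewrite mxE mulr0. Qed.

Lemma dotpp_ge0 a : 0 <= dotp a a.
Proof. by apply: sumr_ge0 => i _; rewrite -expr2 sqr_ge0. Qed.

Lemma dotpp_eq0 a : dotp a a = 0 -> a = 0.
Proof.
move=> /psumr_eq0P sq_eq0; apply/rowP => i; rewrite mxE.
have /eqP := sq_eq0 (fun i _ => ltac:(by rewrite -expr2 sqr_ge0)) i isT.
by rewrite mulf_eq0 orbb (ord1 ord0) => /eqP.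
Qed.

Lemma sqr_enorm a : enorm a ^+ 2 = dotp a a.
Proof. by rewrite sqr_sqrtr ?dotpp_ge0. Qed.

Lemma enorm_ge0 a : 0 <= enorm a.
Proof. exact: sqrtr_ge0. Qed.

Lemma dotp_sqr_le a b : dotp a b ^+ 2 <= dotp a a * dotp b b.
Proof.
have [/dotpp_eq0 ->|nz_b] := eqVneq (dotp b b) 0.
  by rewrite !dotp0r expr0n /= mulr0.
have bb_gt0 : 0 < dotp b b by rewrite lt_def nz_b dotpp_ge0.
have := dotpp_ge0 (dotp b b *: a + (- dotp a b) *: b).
rewrite !(dotpDl, dotpDr, dotpZl, dotpZr) (dotpC b a).
move: (dotp a a) (dotp b b) (dotp a b) bb_gt0 => A B C B_gt0 sq_ge0.
nra.
Qed.

Lemma dotp_norm_le a b : `|dotp a b| <= enorm a * enorm b.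
Proof.
by rewrite -sqrtr_sqr -sqrtrM ?dotpp_ge0 // ler_wsqrtr // dotp_sqr_le.
Qed.

Definition gram v a := dotp v v * dotp a a - dotp v a ^+ 2.

Lemma gram_ge0 v a : 0 <= gram v a.
Proof. by rewrite subr_ge0 dotp_sqr_le. Qed.

Lemma dotp_rej_sqr_le v a b :
  (dotp v v * dotp a b - dotp v a * dotp v b) ^+ 2 <= gram v a * gram v b.
Proof.
have [/dotpp_eq0 ->|nz_v] := eqVneq (dotp v v) 0.
  by rewrite /gram !(dotpC 0) !dotp0r !mul0r expr0n /= subrr expr0n mulr0.
(* [rej c] is [dotp v v] times the component of [c] orthogonal to [v]. *)
pose rej c := dotp v v *: c + (- dotp v c) *: v.
have dotp_rej c c' : dotp (rej c) (rej c') =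
    dotp v v * (dotp v v * dotp c c' - dotp v c * dotp v c').
  rewrite !(dotpDl, dotpDr, dotpZl, dotpZr) !(dotpC c v) ?(dotpC c' v).
  ring.
have dotp_rej_gram c : dotp (rej c) (rej c) = dotp v v * gram v c.
  by rewrite dotp_rej /gram expr2.
have N2_gt0 : 0 < dotp v v ^+ 2 by rewrite exprn_gt0 // lt_def nz_v dotpp_ge0.
have := dotp_sqr_le (rej a) (rej b).
rewrite dotp_rej !dotp_rej_gram => rej_le.
by rewrite exprMn [in X in _ <= X]mulrACA -expr2 ler_pM2l in rej_le.
Qed.

Lemma dotp_ge_sqrt_gram v a b :
  dotp v a * dotp v b - Num.sqrt (gram v a) * Num.sqrt (gram v b)
    <= dotp v v * dotp a b.
Proof.
have := ler_wsqrtr (dotp_rej_sqr_le v a b).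
rewrite sqrtr_sqr sqrtrM ?gram_ge0 // ler_norml => /andP[lower _].
lra.
Qed.

Lemma gram_shift_le v X : gram v (v + X) <= dotp X X * dotp (v + X) (v + X).
Proof.
rewrite -subr_ge0.
suff -> : dotp X X * dotp (v + X) (v + X) - gram v (v + X)
    = (dotp v X + dotp X X) ^+ 2 by exact: sqr_ge0.
by rewrite /gram !(dotpDl, dotpDr) (dotpC X v); ring.
Qed.

Lemma sqrt_gram_shift_le v X :
  Num.sqrt (gram v (v + X)) <= enorm X * enorm (v + X).
Proof. by rewrite -sqrtrM ?dotpp_ge0 // ler_wsqrtr // gram_shift_le. Qed.

Lemma dotp_shift_ge v X : enorm v * (enorm v - enorm X) <= dotp v (v + X).
Proof.
have := dotp_norm_le v X; rewrite ler_norml => /andP[lower _].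
rewrite dotpDr -sqr_enorm; lra.
Qed.

Lemma enorm_shift_gt0 v X : enorm X < enorm v -> 0 < enorm (v + X).
Proof.
move=> ltXv; have v_gt0 : 0 < enorm v := le_lt_trans (enorm_ge0 X) ltXv.
rewrite -(pmulr_rgt0 _ v_gt0).
apply: lt_le_trans (dotp_norm_le v (v + X)); apply: lt_le_trans (ler_norm _).
by apply: lt_le_trans (dotp_shift_ge v X); rewrite mulr_gt0 // subr_gt0.
Qed.

Lemma dotp_shift_ge_sqrt v X : enorm X <= enorm v ->
  Num.sqrt (enorm v ^+ 2 - enorm X ^+ 2) * enorm (v + X) <= dotp v (v + X).
Proof.
move=> leXv; have vX_ge0 : 0 <= dotp v (v + X).
  by apply: le_trans (dotp_shift_ge v X); rewrite mulr_ge0 ?enorm_ge0 ?subr_ge0.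
have le_sqr : 0 <= enorm v ^+ 2 - enorm X ^+ 2.
  by rewrite subr_ge0 ler_sqr ?nnegrE ?enorm_ge0.
rewrite [enorm (v + X)]/enorm -sqrtrM // -(ger0_norm vX_ge0) -sqrtr_sqr.
rewrite ler_wsqrtr // !sqr_enorm.
have := gram_shift_le v X; rewrite /gram; lra.
Qed.

End InnerProduct.

Lemma sqrt_1B_div (R : rcfType) (n x : R) : 0 < n ->
  Num.sqrt (1 - x ^+ 2 / n ^+ 2) = Num.sqrt (n ^+ 2 - x ^+ 2) / n.
Proof.
move=> n_gt0; have n2_neq0 : n ^+ 2 != 0 by rewrite expf_neq0 ?gt_eqF.
have -> : 1 - x ^+ 2 / n ^+ 2 = (n ^+ 2)^-1 * (n ^+ 2 - x ^+ 2).
  by rewrite mulrBr mulVf // mulrC.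
rewrite sqrtrM ?invr_ge0 ?sqr_ge0 // sqrtrV ?sqr_ge0 // sqrtr_sqr.
by rewrite gtr0_norm // mulrC.
Qed.

Theorem lemma1 (R : rcfType) (d : nat) (v X Y : 'rV[R]_d)
  (hX : enorm X < enorm v) (hY : enorm Y < enorm v) :
  cossim (v + X) (v + Y) >=
    - (enorm X * enorm Y) / (enorm v ^+ 2)
    + Num.sqrt (1 - enorm X ^+ 2 / enorm v ^+ 2)
      * Num.sqrt (1 - enorm Y ^+ 2 / enorm v ^+ 2).
Proof.
have v_gt0 : 0 < enorm v := le_lt_trans (enorm_ge0 X) hX.
rewrite /cossim !sqrt_1B_div // ler_pdivlMr ?mulr_gt0 ?enorm_shift_gt0 //.
set n := enorm v; set x := enorm X; set y := enorm Y.
set A := enorm (v + X); set B := enorm (v + Y).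
set cx := Num.sqrt (n ^+ 2 - x ^+ 2); set cy := Num.sqrt (n ^+ 2 - y ^+ 2).
have cos_le : cx * A * (cy * B) <= dotp v (v + X) * dotp v (v + Y).
  apply: ler_pM; rewrite ?mulr_ge0 ?sqrtr_ge0 ?enorm_ge0 //.
    exact: dotp_shift_ge_sqrt (ltW hX).
  exact: dotp_shift_ge_sqrt (ltW hY).
have sin_le : Num.sqrt (gram v (v + X)) * Num.sqrt (gram v (v + Y))
    <= x * A * (y * B).
  by apply: ler_pM; rewrite ?sqrt_gram_shift_le ?sqrtr_ge0.
have := dotp_ge_sqrt_gram v (v + X) (v + Y); rewrite -sqr_enorm -/n.
have -> : (- (x * y) / n ^+ 2 + cx / n * (cy / n)) * (A * B)
    = (cx * A * (cy * B) - x * A * (y * B)) / n ^+ 2.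
  by field; rewrite gt_eqF.
rewrite ler_pdivrMr ?exprn_gt0 //; lra.
Qed.
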